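(* Let $E$ be an ordered Banach space, let $A>0$, let $n\geq 1$ be an integer, and let $f:[0,A]\rightarrow E$ be a continuous $n$-convex function. Then for all $x_{1},\ldots,x_{n}\geq 0$ with $\sum_{i=1}^{n}x_{i}\leq A$, \[ f\Bigl(\sum_{i=1}^{n}x_{i}\Bigr)-\sum_{1\leq i_{1}<\cdots<i_{n-1}\leq n}f(x_{i_{1}}+\cdots+x_{i_{n-1}})+\sum_{1\leq i_{1}<\cdots<i_{n-2}\leq n}f(x_{i_{1}}+\cdots+x_{i_{n-2}})-\cdots+(-1)^{n-1}\sum_{i=1}^{n}f(x_{i})\geq(-1)^{n-1}f(0). \] Equivalently, $\sum_{\varepsilon_{1},\ldots,\varepsilon_{n}\in\{0,1\}}(-1)^{n-(\varepsilon_{1}+\cdots+\varepsilon_{n})}f(\varepsilon_{1}x_{1}+\cdots+\varepsilon_{n}x_{n})\geq 0$.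
   Context: An ordered Banach space is a Banach space $E$ with the order $x\leq y$ iff $y-x\in E_{+}$, where $E_{+}$ is a closed convex cone with $E=E_{+}-E_{+}$, $(-E_{+})\cap E_{+}=\{0\}$, and $0\leq x\leq y$ implies $\|x\|\leq\|y\|$. For distinct points $x_0,\ldots,x_n$ of an interval, the divided difference is $[x_{0},\ldots,x_{n};f]=\sum_{j=0}^{n}\frac{f(x_{j})}{\prod_{k\neq j}(x_{j}-x_{k})}$. A function $f$ (real- or $E$-valued) on an interval is $n$-convex if all its divided differences of order $n$ (on $n+1$ distinct points) are $\geq 0$. *)

From HB Require Import structures.
From mathcomp Require Import all_boot all_order all_algebra.
From mathcomp Require Import all_classical all_reals all_analysis.
Set Implicit Arguments. Unset Strict Implicit. Unset Printing Implicit Defensive.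
Import Order.TTheory GRing.Theory Num.Theory.
Import numFieldNormedType.Exports.
Local Open Scope classical_set_scope.
Local Open Scope ring_scope.

(* An ordered Banach space: a Banach space E (complete normed space over R)
   together with a positive cone P = E_+ which is a closed convex cone,
   generating (E = E_+ - E_+), pointed ((-E_+) ∩ E_+ = {0}) and such that the
   norm is monotone (0 <= x <= y implies |x| <= |y|).  x <= y iff y - x \in P. *)
Definition ordered_banach_cone (R : realType) (E : completeNormedModType R)
  (P : set E) : Prop :=
  closed P /\
  (forall x y, P x -> P y -> P (x + y)) /\
  (forall (a : R) x, 0 <= a -> P x -> P (a *: x)) /\
  (forall x, exists y z, [/\ P y, P z & x = y - z]) /\
  (forall x, P x -> P (- x) -> x = 0) /\
  (forall x y, P x -> P (y - x) -> `|x| <= `|y|).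

Definition divdiff (R : realType) (E : normedModType R) (m : nat)
  (x : 'I_m -> R) (f : R -> E) : E :=
  \sum_(j < m) (\prod_(k < m | k != j) (x j - x k))^-1 *: f (x j).

Definition nconvex (R : realType) (E : normedModType R) (P : set E)
  (n : nat) (A : R) (f : R -> E) : Prop :=
  forall x : 'I_n.+1 -> R, injective x ->
    (forall i, 0 <= x i <= A) -> P (divdiff x f).

From HB Require Import structures.
From mathcomp Require Import all_boot all_order all_algebra.
From mathcomp Require Import all_classical all_reals all_analysis.
From mathcomp Require Import zify.
Import Order.TTheory GRing.Theory Num.Theory.
Import numFieldNormedType.Exports.
Local Open Scope classical_set_scope.
Local Open Scope ring_scope.

(* Approximate each [x i] from below by a grid point [k i * h], [h = 1/(N+1)].
   On the grid the alternating subset sum is the mixed difference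
   [Delta_(k_1 h) ... Delta_(k_n h) f 0].  Writing a step [k h] as [h + (k-1) h]
   splits it into a sum of forward differences [Delta_h^n f (m h)] (terms with
   some [k i = 0] vanish), and each of these is [n! h^n] times a divided
   difference at equally spaced nodes, hence lies in the cone.  Letting
   [N -> oo], continuity of [f] and closedness of the cone conclude. *)

Lemma sum_subsets_by_pair {I : finType} {V : nmodType} (i : I) (G : {set I} -> V) :
  \sum_(S : {set I}) G S = \sum_(S : {set I} | i \notin S) (G S + G (i |: S)).
Proof.
rewrite (bigID (fun S : {set I} => i \in S)) /= addrC big_split /=; congr (_ + _).
rewrite (reindex_onto (fun S => i |: S) (fun S => S :\ i)) /=.
  apply: eq_bigl => S; rewrite finset.setU11 /=.
  have [iS | iNS] := boolP (i \in S); last by rewrite finset.setU1K // eqxx.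
  by apply/negbTE/eqP => defS; move: iS; rewrite -defS finset.setD11.
by move=> S iS; rewrite finset.setD1K.
Qed.

Lemma sum_subsets_by_card {V : nmodType} (n : nat) (G : nat -> V) :
  \sum_(S : {set 'I_n}) G #|S| = \sum_(j < n.+1) G j *+ 'C(n, j).
Proof.
rewrite (partition_big (fun S : {set 'I_n} => inord #|S| : 'I_n.+1) xpredT) //=.
apply: eq_bigr => j _.
rewrite (eq_bigl (fun S : {set 'I_n} => #|S| == j)); last first.
  move=> S /=; rewrite -val_eqE /= inordK // ltnS.
  by have := max_card S; rewrite card_ord.
rewrite (eq_bigr (fun _ => G j)); last by move=> S /eqP ->.
by rewrite sumr_const -cardsE card_draws card_ord.
Qed.

Section MixedDifference.
Context {R : pzRingType} {V : lmodType R} {n : nat} (F : nat -> V).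

(* [Delta_(k_1) ... Delta_(k_n) F m], expanded over the subsets of steps. *)
Definition mixed_diff (k : 'I_n -> nat) (m : nat) : V :=
  \sum_(S : {set 'I_n}) (-1) ^+ (n - #|S|) *: F (m + \sum_(j in S) k j)%N.

Definition upd (k : 'I_n -> nat) (i : 'I_n) (a : nat) (j : 'I_n) : nat :=
  if j == i then a else k j.

Lemma sum_upd_notin k i a (T : {set 'I_n}) : i \notin T ->
  (\sum_(j in T) upd k i a j = \sum_(j in T) k j)%N.
Proof.
move=> iNT; apply: eq_bigr => j jT; rewrite /upd; case: eqP => // eji.
by move: iNT; rewrite -eji jT.
Qed.

Lemma sum_upd k i a : (\sum_j upd k i a j + k i = \sum_j k j + a)%N.
Proof.
rewrite (bigD1 i) //= [in RHS](bigD1 i) //= /upd eqxx.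
rewrite (eq_bigr k) => [|j /negbTE -> //]; lia.
Qed.

Lemma mixed_diff_split i k m : mixed_diff k m =
  \sum_(T : {set 'I_n} | i \notin T) (-1) ^+ (n - #|T|) *:
     (F (m + \sum_(j in T) k j)%N - F (m + \sum_(j in T) k j + k i)%N).
Proof.
rewrite /mixed_diff (sum_subsets_by_pair i); apply: eq_bigr => T iNT.
have ltTn : (#|T| < n)%N.
  by have := max_card (i |: T); rewrite cardsU1 iNT card_ord.
have -> : (n - #|T| = (n - #|i |: T|).+1)%N by rewrite cardsU1 iNT; lia.
rewrite big_setU1 //= exprS mulN1r scalerBr !scaleNr opprK.
by rewrite [(k i + _)%N]addnC addnA.
Qed.

Lemma mixed_diff_eq0 i k m : k i = 0%N -> mixed_diff k m = 0.
Proof.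
by move=> ki0; rewrite (mixed_diff_split i) big1 // => T _; rewrite ki0 addn0 subrr scaler0.
Qed.

(* Splitting the step [k i] as [1 + (k i - 1)]: [F a - F (a + k i)] telescopes through [F (a + 1)]. *)
Lemma mixed_diff_decomp i k m : (0 < k i)%N ->
  mixed_diff k m = mixed_diff (upd k i 1) m + mixed_diff (upd k i (k i).-1) m.+1.
Proof.
move=> ki_gt0; rewrite !(mixed_diff_split i) -big_split /=.
apply: eq_bigr => T iNT; rewrite !sum_upd_notin // /upd !eqxx -scalerDr.
set c := (\sum_(j in T) k j)%N.
have -> : (m.+1 + c + (k i).-1 = m + c + k i)%N by lia.
by rewrite [(m.+1 + c)%N]addSn -[(m + c).+1]addn1 addrA subrK.
Qed.

Lemma mixed_diff_in_cone {P : set V} {M : nat} :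
  P 0 -> (forall u v, P u -> P v -> P (u + v)) ->
  (forall m, (m + n <= M)%N -> P (mixed_diff (fun=> 1%N) m)) ->
  forall k m, (m + \sum_j k j <= M)%N -> P (mixed_diff k m).
Proof.
move=> P0 PD Pdiff k; have [N] := ubnP (\sum_j k j)%N.
elim: N k => // N IH k ltkN m leM.
have [[i k_gt1] | k_le1] := pselect (exists i, 1 < k i)%N.
  have := sum_upd k i 1; have := sum_upd k i (k i).-1 => s1 s2.
  rewrite (mixed_diff_decomp i) ?(ltnW k_gt1) //.
  by apply: PD; apply: IH; lia.
have [[i ki0] | k_neq0] := pselect (exists i, k i = 0%N).
  by rewrite (mixed_diff_eq0 _ _ m ki0).
have k1 : k = fun=> 1%N.
  apply/funext => i; have := k_le1; have := k_neq0.
  by move=> /forallNP /(_ i) ? /forallNP /(_ i) /negP; lia.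
move: leM; rewrite k1 sum_nat_const card_ord muln1; exact: Pdiff.
Qed.

End MixedDifference.

Lemma prod_node_diffs (R : numDomainType) (n : nat) (j : 'I_n.+1) :
  \prod_(k < n.+1 | k != j) ((j : nat)%:R - (k : nat)%:R : R) =
  (-1) ^+ (n - j) * (j`! * (n - j)`!)%:R.
Proof.
have jn : (j <= n)%N by rewrite -ltnS.
rewrite -(big_mkord (fun k => k != j :> nat) (fun k => j%:R - k%:R)) big_mkcond.
rewrite (@big_cat_nat _ _ _ j 0 n.+1) //; last exact: ltnW.
rewrite /= [X in _ * X]big_ltn ?ltn_ord // eqxx mul1r.
rewrite (@eq_big_nat _ _ _ 0 j _ (fun i : nat => (j - i)%:R)); last first.
  by move=> i /andP[_ ij]; rewrite neq_ltn ij natrB // ltnW.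
rewrite (@eq_big_nat _ _ _ j.+1 n.+1 _ (fun i : nat => - (i - j)%:R)); last first.
  by move=> i /andP[ji _]; rewrite neq_ltn ji orbT natrB ?opprB // ltnW.
rewrite -natr_prod big_mkord -ffact_prod ffactnn.
rewrite -{1}(add1n j) big_addn subSn // big_add1 /= big_mkord.
rewrite (eq_bigr (fun i : 'I_(n - j) => - (i.+1)%:R)); last by move=> i _; rewrite addnK.
rewrite prodrN card_ord -natr_prod natrM mulrCA.
by rewrite (fact_prod (n - j)) big_add1 /= big_mkord.
Qed.

Lemma divdiff_equispaced (R : realType) (E : normedModType R) (n : nat) (a h : R)
    (f : R -> E) : h != 0 ->
  (h ^+ n * n`!%:R) *: divdiff (fun j : 'I_n.+1 => a + (j : nat)%:R * h) f =
  \sum_(S : {set 'I_n}) (-1) ^+ (n - #|S|) *: f (a + #|S|%:R * h).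
Proof.
move=> h_neq0.
rewrite (sum_subsets_by_card n (fun t => (-1) ^+ (n - t) *: f (a + t%:R * h))).
rewrite /divdiff scaler_sumr; apply: eq_bigr => j _.
rewrite scalerA scalerMnl; congr (_ *: _).
rewrite (eq_bigr (fun k : 'I_n.+1 => h * ((j : nat)%:R - (k : nat)%:R))); last first.
  by move=> k _; rewrite opprD addrACA subrr add0r -mulrBl mulrC.
have jn : (j <= n)%N by rewrite -ltnS.
rewrite big_split /= prod_node_diffs prodr_const cardC1 card_ord /=.
have fact_neq0 k : k`!%:R != 0 :> R by rewrite pnatr_eq0 -lt0n fact_gt0.
rewrite -(bin_fact jn) !natrM -!mulf_div !divff ?expf_neq0 ?fact_neq0 //.
by rewrite mul1r !mulr1 invr_sign mulr_natl.
Qed.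

Lemma nconvex_mixed_diff_grid {R : realType} {E : normedModType R} {P : set E}
    {n : nat} {A h : R} {f : R -> E} {k : 'I_n -> nat} :
  P 0 -> (forall u v, P u -> P v -> P (u + v)) ->
  (forall (a : R) u, 0 <= a -> P u -> P (a *: u)) ->
  nconvex P n A f -> 0 < h -> (\sum_i k i)%:R * h <= A ->
  P (\sum_(S : {set 'I_n}) (-1) ^+ (n - #|S|) *: f (\sum_(i in S) (k i)%:R * h)).
Proof.
move=> P0 PD PZ fconv h_gt0 kA.
have forward_diff m : (m + n <= \sum_i k i)%N ->
    P (mixed_diff (fun m => f (m%:R * h)) (fun _ : 'I_n => 1%N) m).
  move=> le_mn; rewrite /mixed_diff.
  under eq_bigr do rewrite sum1_card natrD mulrDl.
  rewrite -divdiff_equispaced ?gt_eqF //.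
  apply: PZ; first by rewrite mulr_ge0 ?exprn_ge0 ?ltW.
  apply: fconv => [i j /addrI /(mulIf (lt0r_neq0 h_gt0)) /eqP|i].
    by rewrite eqr_nat => /eqP /val_inj.
  rewrite addr_ge0 ?mulr_ge0 ?ler0n ?(ltW h_gt0) //= -mulrDl -natrD.
  apply: le_trans kA; rewrite ler_wpM2r ?(ltW h_gt0) // ler_nat.
  by apply: leq_trans le_mn; rewrite leq_add2l -ltnS.
have := mixed_diff_in_cone _ P0 PD forward_diff k 0 (leqnn _).
by rewrite /mixed_diff; under eq_bigr do rewrite add0n natr_sum mulr_suml.
Qed.

Lemma truncn_grid_bounds {R : realType} (y : R) (N : nat) : 0 <= y ->
  y - N.+1%:R^-1 <= (Num.truncn (y * N.+1%:R))%:R / N.+1%:R <= y.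
Proof.
move=> y_ge0; apply/andP; split.
  rewrite lerBlDr -[X in _ + X]mul1r -mulrDl natr1 ler_pdivlMr ?ltr0n //.
  exact/ltW/truncnS_gt.
by rewrite ler_pdivrMr ?ltr0n // truncn_le mulr_ge0.
Qed.

Lemma truncn_grid_cvg (R : realType) (y : R) : 0 <= y ->
  (fun N => (Num.truncn (y * N.+1%:R))%:R / N.+1%:R) @ \oo --> y.
Proof.
move=> y_ge0; apply: (squeeze_cvgr _ _ (cvg_cst y)).
  by apply: nearW => N; exact: truncn_grid_bounds.
by rewrite -[X in _ --> X]subr0; apply: cvgB (cvg_cst y) cvg_harmonic.
Qed.

Lemma continuous_within_cvg_seq {U V : topologicalType} (D : set U) (f : U -> V)
    (u : nat -> U) (y : U) :
  {within D, continuous f} -> D y -> (forall N, D (u N)) -> u @ \oo --> y ->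
  (fun N => f (u N)) @ \oo --> f y.
Proof.
move=> /subspace_continuousP fD Dy Du u_y; apply: cvg_comp (fD y Dy) => B /u_y uB.
by apply: (filterS (P := fun N => D (u N) -> B (u N))) uB => N; apply.
Qed.

Lemma subset_sum_itv (R : realDomainType) (n : nat) (x : 'I_n -> R) (A : R)
    (S : {set 'I_n}) :
  (forall i, 0 <= x i) -> \sum_i x i <= A -> \sum_(i in S) x i \in `[0, A].
Proof.
move=> x_ge0 sx_le; rewrite in_itv /= sumr_ge0 //=; apply: le_trans sx_le.
by rewrite [leRHS](bigID (mem S)) /= lerDl sumr_ge0.
Qed.

Lemma cvg_comp_subset_sums {R : realType} {E : normedModType R} {n : nat} {A : R}
    {f : R -> E} (c : {set 'I_n} -> R) {y : nat -> 'I_n -> R} {x : 'I_n -> R} :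
  {within `[0, A], continuous f} ->
  (forall N i, 0 <= y N i) -> (forall N, \sum_i y N i <= A) ->
  (forall i, 0 <= x i) -> \sum_i x i <= A ->
  (forall i, (fun N => y N i) @ \oo --> x i) ->
  (fun N => \sum_(S : {set 'I_n}) c S *: f (\sum_(i in S) y N i)) @ \oo -->
  \sum_(S : {set 'I_n}) c S *: f (\sum_(i in S) x i).
Proof.
move=> fc y_ge0 sy_le x_ge0 sx_le y_x.
apply: cvg_big => [|S _]; first exact: add_continuous.
apply: cvgZ; first exact: cvg_cst.
apply: (continuous_within_cvg_seq _ _ (fun N => \sum_(i in S) y N i) _ fc).
- exact: subset_sum_itv.
- by move=> N; exact: subset_sum_itv.
- by apply: (@cvg_big _ _ _ _ _ add_continuous _ _ _ (fun i N => y N i)) => i _.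
Qed.

Theorem theorem3p1 (R : realType) (E : completeNormedModType R) (P : set E)
  (A : R) (n : nat) (f : R -> E) :
  ordered_banach_cone P -> 0 < A -> (1 <= n)%N ->
  {within `[0, A], continuous f} ->
  nconvex P n A f ->
  forall x : 'I_n -> R, (forall i, 0 <= x i) -> \sum_(i < n) x i <= A ->
  P (\sum_(S : {set 'I_n}) (-1) ^+ (n - #|S|) *: f (\sum_(i in S) x i)).
Proof.
move=> [P_closed [PD [PZ [P_gen _]]]] _ _ fc fconv x x_ge0 sx_le.
have P0 : P 0 by have [u [_ [Pu _ _]]] := P_gen 0; rewrite -(scale0r u); exact: PZ.
pose k N i := Num.truncn (x i * N.+1%:R).
pose y N i : R := (k N i)%:R / N.+1%:R.
have y_le N i : y N i <= x i by case/andP: (truncn_grid_bounds _ N (x_ge0 i)).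
have sy_le N : \sum_i y N i <= A.
  by apply: le_trans sx_le; apply: ler_sum => i _; exact: y_le.
apply: (closed_cvg _ P_closed _ _
  (cvg_comp_subset_sums (fun S => (-1) ^+ (n - #|S|)) fc _ sy_le x_ge0 sx_le _)).
- apply: nearW => N; apply: (nconvex_mixed_diff_grid P0 PD PZ fconv).
    by rewrite invr_gt0 ltr0n.
  by rewrite natr_sum mulr_suml; exact: sy_le.
- by move=> N i; rewrite divr_ge0 ?ler0n.
- by move=> i; exact: truncn_grid_cvg.
Qed.
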